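(* Let $K$ be an (unknown) positive integer, let $0<\mu<1$, and let $\lambda\ge\max\left(\frac{2^{56}}{\mu^2},\ \sqrt[5]{\frac{48}{\mu}\ln K}\right)$. Let $(p,q,\omega)$ be a triple produced by the algorithm described below on input $\lambda$. Then the probability that $q$ divides $K$ is at most $\mu$.
   Context: The algorithm, given $\lambda$ and a failure parameter $\epsilon\in(0,1)$ with $\lambda\ge 2^{58}/\epsilon^2$, proceeds as follows (primality being tested by a deterministic polynomial-time primality test): (1) sample at most $\frac{5}{6}\ln\frac{4}{\epsilon}\ln\lambda$ independent uniformly random odd integers $p\in(\lambda,2\lambda)$ until one is prime; return \textsc{fail} if none is prime. (2) Sample at most $12\ln\frac{4}{\epsilon}\ln\lambda$ independent uniformly random even integers $a\in[1,\lambda^5]$ until $q=ap+1$ is prime; return \textsc{fail} if none gives a prime. (3) Sample at most $\log_p\frac{4}{\epsilon}$ independent uniformly random elements $\zeta\in\mathbb{F}_q^\times$ until $\omega=\zeta^{(q-1)/p}\ne 1$; return \textsc{fail} if $\omega=1$ for every sampled $\zeta$. (4) Return $(p,q,\omega)$. With probability at least $1-\epsilon$ this returns a triple in which $p$ is a uniformly random prime in $(\lambda,2\lambda)$, $q\le\lambda^6$ is a prime with $p\mid q-1$, and $\omega$ is a primitive $p$-th root of unity in $\mathbb{F}_q$. *)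

From HB Require Import structures.
From mathcomp Require Import all_boot all_order all_algebra.
From mathcomp Require Import all_classical all_reals.
From mathcomp Require Import exp.
Set Implicit Arguments. Unset Strict Implicit. Unset Printing Implicit Defensive.
Import Order.TTheory GRing.Theory Num.Theory.
Local Open Scope ring_scope.

(* Finitely supported (sub)probability distributions with weights in R:
   a list of (weight, outcome) pairs. *)
Section Dist.
Variable R : realType.

Definition dist (T : Type) := seq (R * T).

Definition dret (T : Type) (x : T) : dist T := [:: (1, x)].

Definition dbind (T U : Type) (d : dist T) (f : T -> dist U) : dist U :=
  flatten [seq [seq (w.1 * v.1, v.2) | v <- f w.2] | w <- d].

Definition duniform (T : Type) (s : seq T) : dist T :=
  [seq ((size s)%:R^-1, x) | x <- s].

Definition dprob (T : Type) (d : dist T) (E : T -> bool) : R :=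
  \sum_(w <- d) w.1 * (E w.2)%:R.

Fixpoint retry (T : Type) (n : nat) (d : dist (option T)) : dist (option T) :=
  match n with
  | 0 => dret None
  | n'.+1 => dbind d (fun o => match o with
                              | Some x => dret (Some x)
                              | None => retry n' d
                              end)
  end.

(* "at most x samples" = floor x samples *)
Definition nb_tries (x : R) : nat := Num.truncn x.

(* The odd integers p with lam < p < 2 lam. *)
Definition odd_range (lam : nat) : seq nat :=
  [seq n <- iota lam.+1 lam.-1 | odd n].

Definition even_range (lam : nat) : seq nat :=
  [seq a <- iota 1 (lam ^ 5) | ~~ odd a].

(* F_q^x for prime q, represented as the residues 1 .. q-1 (arithmetic mod q). *)
Definition Fq_units (q : nat) : seq nat := iota 1 q.-1.

(* The algorithm, on input lam and failure parameter eps.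
   Output: None = FAIL, Some (p, q, omega) otherwise, where omega is the
   residue mod q representing zeta^((q-1)/p) in F_q. *)
Definition step1 (lam : nat) (eps : R) : dist (option nat) :=
  retry (nb_tries (5%:R / 6%:R * ln (4 / eps) * ln lam%:R))
    (dbind (duniform (odd_range lam))
       (fun p => dret (if prime p then Some p else None))).

Definition step2 (lam : nat) (eps : R) (p : nat) : dist (option nat) :=
  retry (nb_tries (12%:R * ln (4 / eps) * ln lam%:R))
    (dbind (duniform (even_range lam))
       (fun a => dret (if prime (a * p + 1) then Some (a * p + 1)%N else None))).

Definition step3 (eps : R) (p q : nat) : dist (option nat) :=
  retry (nb_tries (ln (4 / eps) / ln p%:R))
    (dbind (duniform (Fq_units q))
       (fun zeta => let omega := ((zeta ^ ((q - 1) %/ p)) %% q)%N in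
                    dret (if omega != 1%N then Some omega else None))).

Definition algorithm (lam : nat) (eps : R) : dist (option (nat * nat * nat)) :=
  dbind (step1 lam eps) (fun op =>
  match op with
  | None => dret None
  | Some p =>
    dbind (step2 lam eps p) (fun oq =>
    match oq with
    | None => dret None
    | Some q =>
      dbind (step3 eps p q) (fun ow =>
      match ow with
      | None => dret None
      | Some omega => dret (Some (p, q, omega))
      end)
    end)
  end).

End Dist.

(* The run reports q | K only if some pair (p, a), with p a prime in (lam, 2 lam)
   and a even in [1, lam^5], makes a p + 1 a prime divisor of K.  A union bound
   over the at most n1 <= (5/6) L ln lam and n2 <= 12 L ln lam attempts of steps 1
   and 2, where L = ln (4/eps) <= (ln lam) / 2, bounds the probability by
   n1 n2 N / (#p-candidates * #a-candidates), N the number of such pairs.  A prime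
   r > lam dividing K comes from at most six pairs, since the admissible p are
   distinct primes > lam dividing r - 1 < (lam + 1)^7; and K has at most
   ln K / ln lam prime divisors > lam.  Hence the probability is at most
   15 ln K / lam^5 <= mu. *)

From HB Require Import structures.
From mathcomp Require Import all_boot all_order all_algebra.
From mathcomp Require Import all_classical all_reals.
From mathcomp Require Import exp.
From mathcomp Require Import ring lra zify.

Set Implicit Arguments. Unset Strict Implicit. Unset Printing Implicit Defensive.
Import Order.TTheory GRing.Theory Num.Theory.

Lemma count_odd_iota m n : count odd (iota m n) = (m + n)./2 - m./2.
Proof.
elim: n => [|n IHn]; first by rewrite addn0 subnn.
rewrite -addn1 iotaD count_cat IHn /= addn0 addnA addn1 -uphalfE uphalf_half.
by have := half_leq (leq_addr n m); lia.
Qed.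

Lemma count_even_iota m n :
  count (fun k => ~~ odd k) (iota m n) = n - ((m + n)./2 - m./2).
Proof.
by rewrite -count_odd_iota -[n in n - _](size_iota m n) -(count_predC odd) addKn.
Qed.

Lemma size_odd_range lam : lam <= (size (odd_range lam)).*2 + 2.
Proof.
rewrite size_filter count_odd_iota.
have := odd_double_half (lam.+1 + lam.-1); have := odd_double_half lam.+1.
lia.
Qed.

Lemma size_even_range lam : lam ^ 5 <= (size (even_range lam)).*2 + 1.
Proof.
rewrite size_filter count_even_iota.
have := odd_double_half (1 + lam ^ 5); set L := lam ^ 5; lia.
Qed.

Lemma prod_uniq_primes_dvdn s n :
  uniq s -> all prime s -> all (dvdn^~ n) s -> \prod_(p <- s) p %| n.
Proof.
elim: s => [|p s IHs] /=; first by rewrite big_nil dvd1n.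
case/andP=> p_s s_uniq /andP[p_pr s_pr] /andP[p_n s_n].
rewrite big_cons Gauss_dvd ?p_n ?IHs // prime_coprime // Euclid_dvd_prod // big_has.
apply/hasPn=> q q_s; rewrite dvdn_prime2 ?(allP s_pr q q_s) //.
by apply: contraNN p_s => /eqP->.
Qed.

Lemma leq_exp_size_prime_divisors l n s :
  0 < n -> uniq s -> all prime s -> all (dvdn^~ n) s -> all (leq l.+1) s ->
  l.+1 ^ size s <= n.
Proof.
move=> n_gt0 s_uniq s_pr s_n s_gt.
apply: (@leq_trans (\prod_(p <- s) p)); last first.
  by rewrite dvdn_leq ?prod_uniq_primes_dvdn.
elim: s s_gt {s_uniq s_pr s_n} => [|p s IHs] /=; first by rewrite big_nil.
by case/andP=> p_gt s_gt; rewrite big_cons expnS leq_mul ?IHs.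
Qed.

Lemma count_mem_le_sum (T : Type) (U : eqType) (f : T -> U) (s : seq U) (t : seq T) :
  count (fun a => f a \in s) t <= \sum_(r <- s) count (fun a => f a == r) t.
Proof.
elim: s => [|r s IHs]; first by rewrite big_nil (eq_count (a2 := pred0)) ?count_pred0.
rewrite big_cons; apply: leq_trans (leq_add (leqnn _) IHs).
apply: (@leq_trans (count (predU (fun a => f a == r) (fun a => f a \in s)) t)).
  by apply: sub_count => a; rewrite /= inE.
by rewrite -count_predUI leq_addr.
Qed.

Lemma count_inj_eq_le (T U : eqType) (f : T -> U) (s : seq T) r :
  injective f -> uniq s -> count (fun a => f a == r) s <= (r \in map f s).
Proof.
by move=> f_inj s_uniq; rewrite -count_uniq_mem ?map_inj_uniq // count_map.
Qed.

Lemma mem_odd_range lam p : p \in odd_range lam -> lam < p < lam.*2.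
Proof. by rewrite mem_filter mem_iota => /andP[_]; lia. Qed.

Lemma mem_even_range lam a : a \in even_range lam -> 0 < a <= lam ^ 5.
Proof. by rewrite mem_filter mem_iota => /andP[_]; lia. Qed.

Lemma sum_count_preimage_le6 lam r :
  \sum_(p <- odd_range lam | prime p) count (fun a => a * p + 1 == r) (even_range lam)
  <= 6.
Proof.
set S := [seq p <- odd_range lam | prime p && (r \in [seq a * p + 1 | a <- even_range lam])].
have S_uniq : uniq S by rewrite !filter_uniq ?iota_uniq.
apply: (@leq_trans (size S)).
  rewrite size_filter -sum1_count big_mkcondr /=; apply: leq_sum => p p_pr.
  have inj_p : injective (fun a => a * p + 1).
    by move=> a b /addIn /eqP; rewrite eqn_pmul2r ?prime_gt0 // => /eqP.
  apply: (leq_trans (count_inj_eq_le r inj_p _)); first by rewrite filter_uniq ?iota_uniq.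
  by case: (_ \in _).
have memS p : p \in S ->
    [/\ lam < p < lam.*2, prime p & exists2 a, a \in even_range lam & r = a * p + 1].
  rewrite mem_filter => /andP[/andP[p_pr /mapP[a a_even r_eq]] /mem_odd_range p_range].
  by split => //; exists a.
case S_eq: S => [//|p0 S']; rewrite -S_eq.
have p0_S : p0 \in S by rewrite S_eq mem_head.
have [/andP[lam_p0 p0_lam] _ [a0 /mem_even_range a0_range r_eq]] := memS p0 p0_S.
rewrite -ltnS -(@ltn_exp2l lam.+1) //; last lia.
have r1_lt : r.-1 < lam.+1 ^ 7.
  have : lam ^ 5 <= lam.+1 ^ 5 by rewrite leq_exp2r.
  rewrite r_eq addn1 /= (expnD _ 5 2); set Y := lam.+1 ^ 5; set X := lam ^ 5; nia.
apply: leq_ltn_trans r1_lt; apply: leq_exp_size_prime_divisors => //.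
- by rewrite r_eq addn1 muln_gt0; lia.
- by apply/allP=> p /memS[].
- by apply/allP=> p /memS[_ _ [a _ ->]]; rewrite addn1 dvdn_mull.
- by apply/allP=> p /memS[/andP[]].
Qed.

Definition large_prime_divisors (lam K : nat) : seq nat := [seq r <- primes K | lam < r].

Lemma large_prime_divisors_expn_le lam K :
  0 < K -> lam.+1 ^ size (large_prime_divisors lam K) <= K.
Proof.
move=> K_gt0; apply: leq_exp_size_prime_divisors; rewrite ?filter_uniq ?primes_uniq //.
- by apply/allP=> r; rewrite mem_filter mem_primes => /andP[_ /and3P[]].
- by apply/allP=> r; rewrite mem_filter mem_primes => /andP[_ /and3P[]].
- by apply/allP=> r; rewrite mem_filter => /andP[].
Qed.

Definition dividing_pairs (lam K : nat) : nat :=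
  \sum_(p <- odd_range lam | prime p)
     count (fun a => prime (a * p + 1) && (a * p + 1 %| K)) (even_range lam).

Lemma dividing_pairs_le lam K :
  0 < K -> dividing_pairs lam K <= 6 * size (large_prime_divisors lam K).
Proof.
move=> K_gt0; set B := large_prime_divisors lam K.
apply: (@leq_trans (\sum_(r <- B) \sum_(p <- odd_range lam | prime p)
                      count (fun a => a * p + 1 == r) (even_range lam))).
  rewrite /dividing_pairs exchange_big /= big_seq_cond [X in _ <= X]big_seq_cond.
  apply: leq_sum => p /andP[/mem_odd_range p_range _].
  apply: leq_trans (count_mem_le_sum _ _ _); apply: sub_count => a /andP[q_pr q_K].
  have a_gt0 : 0 < a by case: a q_pr {q_K}.
  by rewrite mem_filter mem_primes q_pr K_gt0 q_K andbT; nia.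
rewrite mulnC -sum1_size big_distrl /=.
by apply: leq_sum => r _; rewrite mul1n sum_count_preimage_le6.
Qed.

Lemma size_ranges_mul_ge lam :
  2 < lam -> lam ^ 6 <= 16 * (size (odd_range lam) * size (even_range lam)).
Proof.
move=> lam_gt2; have := size_odd_range lam; have := size_even_range lam.
have : 0 < lam ^ 5 by rewrite expn_gt0; lia.
rewrite (expnS _ 5); set X := lam ^ 5; nia.
Qed.

Local Open Scope ring_scope.

Section Subdistributions.
Variable R : realType.

Definition dexp (T : Type) (d : dist R T) (f : T -> R) : R := \sum_(w <- d) w.1 * f w.2.

Definition weights_ge0 (T : Type) (d : dist R T) : bool := all (fun w => 0 <= w.1) d.

Definition subdist (T : Type) (d : dist R T) : Prop :=
  weights_ge0 d /\ dexp d (fun=> 1) <= 1.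

Lemma dprobE (T : Type) (d : dist R T) (E : T -> bool) :
  dprob d E = dexp d (fun x => (E x)%:R).
Proof. by []. Qed.

Lemma dexp_ret (T : Type) (x : T) (f : T -> R) : dexp (dret R x) f = f x.
Proof. by rewrite /dexp big_seq1 mul1r. Qed.

Lemma dexp_bind (T U : Type) (d : dist R T) (f : T -> dist R U) (g : U -> R) :
  dexp (dbind d f) g = dexp d (fun x => dexp (f x) g).
Proof.
rewrite /dexp /dbind big_flatten big_map; apply: eq_bigr => w _.
by rewrite big_map mulr_sumr; apply: eq_bigr => v _; rewrite mulrA.
Qed.

Lemma dexp_uniform (T : Type) (s : seq T) (f : T -> R) :
  dexp (duniform R s) f = (size s)%:R^-1 * \sum_(x <- s) f x.
Proof. by rewrite /dexp /duniform big_map mulr_sumr. Qed.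

Lemma ler_dexp (T : Type) (d : dist R T) (f g : T -> R) :
  weights_ge0 d -> (forall x, f x <= g x) -> dexp d f <= dexp d g.
Proof.
move=> + fg; elim: d => [|w d IHd] /=; first by rewrite /dexp !big_nil.
case/andP=> w_ge0 d_ge0; rewrite /dexp !big_cons.
by apply: lerD; [exact: ler_wpM2l | exact: IHd].
Qed.

Lemma dexp_ge0 (T : Type) (d : dist R T) (f : T -> R) :
  weights_ge0 d -> (forall x, 0 <= f x) -> 0 <= dexp d f.
Proof.
move=> + f_ge0; elim: d => [|w d IHd] /=; first by rewrite /dexp big_nil.
case/andP=> w_ge0 d_ge0; rewrite /dexp big_cons.
by apply: addr_ge0; [exact: mulr_ge0 | exact: IHd].
Qed.

Lemma dexpD (T : Type) (d : dist R T) (f g : T -> R) :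
  dexp d (fun x => f x + g x) = dexp d f + dexp d g.
Proof. by rewrite /dexp -big_split; apply: eq_bigr => w _; rewrite mulrDr. Qed.

Lemma dexp_cst_le (T : Type) (d : dist R T) (c : R) :
  subdist d -> 0 <= c -> dexp d (fun=> c) <= c.
Proof.
move=> [_ d_le1] c_ge0; rewrite -[X in _ <= X]mulr1.
have -> : dexp d (fun=> c) = c * dexp d (fun=> 1).
  by rewrite /dexp mulr_sumr; apply: eq_bigr => w _; rewrite mulr1 mulrC.
exact: ler_wpM2l.
Qed.

Lemma subdist_ret (T : Type) (x : T) : subdist (dret R x).
Proof. by split; rewrite ?dexp_ret //= ler01. Qed.

Lemma subdist_bind (T U : Type) (d : dist R T) (f : T -> dist R U) :
  subdist d -> (forall x, subdist (f x)) -> subdist (dbind d f).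
Proof.
move=> [d_ge0 d_le1] f_sub; split; last first.
  rewrite dexp_bind; apply: le_trans d_le1; apply: ler_dexp => // x.
  by case: (f_sub x).
elim: d d_ge0 {d_le1} => [//|w d IHd] /= /andP[w_ge0 d_ge0].
rewrite /weights_ge0 /= all_cat all_map; apply/andP; split; last exact: IHd.
have [fw_ge0 _] := f_sub w.2; elim: (f w.2) fw_ge0 => [//|v e IHe] /= /andP[v_ge0 e_ge0].
by rewrite mulr_ge0 //=; apply: IHe.
Qed.

Lemma subdist_uniform (T : Type) (s : seq T) : subdist (duniform R s).
Proof.
split; last first.
  rewrite dexp_uniform (eq_bigr (fun=> 1%:R)) // -natr_sum sum1_size.
  by case: (size s) => [|n]; rewrite ?mulr0 ?ler01 // mulVf ?pnatr_eq0.
rewrite /weights_ge0 all_map (eq_all (a2 := predT)) ?all_predT // => x.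
by rewrite /preim /= invr_ge0 ler0n.
Qed.

Lemma subdist_retry (T : Type) n (d : dist R (option T)) : subdist d -> subdist (retry n d).
Proof.
move=> d_sub; elim: n => [|n IHn] /=; first exact: subdist_ret.
by apply: subdist_bind => // -[x|]; first exact: subdist_ret.
Qed.

Lemma dexp_retry_le (T : Type) n (d : dist R (option T)) (g : T -> R) :
  subdist d -> (forall x, 0 <= g x) ->
  dexp (retry n d) (oapp g 0) <= n%:R * dexp d (oapp g 0).
Proof.
move=> d_sub g_ge0; have og_ge0 o : 0 <= oapp g 0 o by case: o.
have E_ge0 : 0 <= dexp d (oapp g 0) by apply: dexp_ge0 => //; case: d_sub.
elim: n => [|n IHn] /=; first by rewrite dexp_ret mul0r.
rewrite dexp_bind.
apply: (@le_trans _ _ (dexp d (fun o => oapp g 0 o + n%:R * dexp d (oapp g 0)))).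
  apply: ler_dexp => [|[x|]]; first by case: d_sub.
    by rewrite dexp_ret /= lerDl mulr_ge0.
  by rewrite add0r.
rewrite dexpD mulrSr mulrDl mul1r addrC lerD2r.
by apply: dexp_cst_le => //; rewrite mulr_ge0.
Qed.

Lemma subdist_sample (T U : Type) (s : seq T) (f : T -> U) :
  subdist (dbind (duniform R s) (fun x => dret R (f x))).
Proof. by apply: subdist_bind => [|x]; [exact: subdist_uniform | exact: subdist_ret]. Qed.

Lemma dexp_retry_sample_le (T U : Type) n (s : seq T) (f : T -> option U) (g : U -> R) :
  (forall y, 0 <= g y) ->
  dexp (retry n (dbind (duniform R s) (fun x => dret R (f x)))) (oapp g 0)
  <= n%:R * ((size s)%:R^-1 * \sum_(x <- s) oapp g 0 (f x)).
Proof.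
move=> g_ge0; apply: le_trans (dexp_retry_le _ (subdist_sample _ _) g_ge0) _.
by rewrite dexp_bind dexp_uniform; under eq_bigr do rewrite dexp_ret.
Qed.

End Subdistributions.

Lemma sum_oapp_if (R : realType) (T U : Type) (s : seq T) (P : pred T) (f : T -> U) (g : U -> R) :
  \sum_(x <- s) oapp g 0 (if P x then Some (f x) else None) = \sum_(x <- s | P x) g (f x).
Proof. by rewrite [RHS]big_mkcond; apply: eq_bigr => x _; case: (P x). Qed.

Lemma natr_count (R : realType) (T : Type) (P : pred T) (s : seq T) :
  (count P s)%:R = \sum_(x <- s) (P x)%:R :> R.
Proof. by rewrite -sum1_count natr_sum big_mkcond; apply: eq_bigr => x _; case: (P x). Qed.

Lemma algorithm_prob_dvd_le_pairs (R : realType) (lam K : nat) (eps : R) :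
  dprob (algorithm lam eps) (fun o => if o is Some (_, q, _) then (q %| K)%N else false)
  <= (nb_tries (5%:R / 6%:R * ln (4 / eps) * ln lam%:R))%:R
     * (nb_tries (12%:R * ln (4 / eps) * ln lam%:R))%:R * (dividing_pairs lam K)%:R
     / ((size (odd_range lam))%:R * (size (even_range lam))%:R).
Proof.
set n1 := nb_tries _; set n2 := nb_tries _.
pose step2_prob p := dexp (step2 lam eps p) (oapp (fun q => (q %| K)%N%:R) 0).
have step2_le p : step2_prob p <=
    n2%:R * ((size (even_range lam))%:R^-1 *
             (count (fun a => prime (a * p + 1) && (a * p + 1 %| K)%N) (even_range lam))%:R).
  apply: le_trans (dexp_retry_sample_le _ _ _ _) _ => [q|]; first exact: ler0n.
  rewrite sum_oapp_if natr_count; apply: ler_wpM2l => //.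
  apply: ler_wpM2l; first by rewrite invr_ge0.
  by rewrite big_mkcond; apply: ler_sum => a _; case: prime.
have step1_sub : subdist (step1 lam eps) by apply/subdist_retry/subdist_sample.
have step2_sub p : subdist (step2 lam eps p) by apply/subdist_retry/subdist_sample.
have step3_sub p q : subdist (step3 eps p q) by apply/subdist_retry/subdist_sample.
rewrite dprobE /algorithm dexp_bind.
apply: (@le_trans _ _ (dexp (step1 lam eps) (oapp step2_prob 0))).
  apply: ler_dexp => [|[p|]]; [by case: step1_sub | | by rewrite dexp_ret].
  rewrite /= dexp_bind; apply: ler_dexp => [|[q|]]; [by case: (step2_sub p) | | by rewrite dexp_ret].
  rewrite /= dexp_bind; apply: le_trans (dexp_cst_le (step3_sub p q) (ler0n _ (q %| K))).
  by apply: ler_dexp => [|[w|]]; [case: (step3_sub p q) | rewrite dexp_ret | rewrite dexp_ret].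
apply: le_trans (dexp_retry_sample_le _ _ _ _) _ => [p|].
  by apply: dexp_ge0 => [|[q|]]; [case: (step2_sub p) | exact: ler0n | ].
rewrite sum_oapp_if.
apply: le_trans (ler_wpM2l _ (ler_wpM2l _ (ler_sum _ (fun p _ => step2_le p)))) _.
- exact: ler0n.
- by rewrite invr_ge0.
by rewrite -!mulr_sumr /dividing_pairs natr_sum invfM le_eqVlt; apply/predU1l; ring.
Qed.

Section Estimates.
Variable R : realType.
Implicit Types x y eps : R.

Lemma cube_ln_le x : 2 ^+ 40 <= x -> 16 * ln x ^+ 3 <= x.
Proof.
move=> x_ge; have x_gt0 : 0 < x by apply: lt_le_trans x_ge; rewrite exprn_gt0.
set s := Num.sqrt (Num.sqrt x).
have s_ge0 : 0 <= s by apply: sqrtr_ge0.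
have x_eq : x = s ^+ 4.
  by rewrite (_ : 4 = 2 * 2)%N // exprM !sqr_sqrtr ?sqrtr_ge0 // ltW.
have s_ge : 2 ^+ 10 <= s by rewrite -(ler_pXn2r (n := 4)) ?nnegrE ?exprn_ge0 // -x_eq -exprM.
have s_gt1 : 1 < s by apply: lt_le_trans s_ge; rewrite exprn_egt1 // ltr1n.
have ln_s_ge0 : 0 <= ln s by rewrite ln_ge0 ?ltW.
have ln_s_le : ln s <= s by rewrite ltW // ln_sublinear // (lt_trans ltr01).
have cube_le := lerXn2r 3 ln_s_ge0 s_ge0 ln_s_le.
have s_ge1024 : 1024 <= s by rewrite -natrX in s_ge.
have s3_ge0 : 0 <= s ^+ 3 by rewrite exprn_ge0.
rewrite x_eq lnXn ?(lt_trans ltr01) // -[ln s *+ 4]mulr_natr exprMn -natrX exprSr.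
nra.
Qed.

Lemma ln_inv_eps_le eps x : 0 < eps -> (4 / eps) ^+ 2 <= x -> 2 * ln (4 / eps) <= ln x.
Proof.
move=> eps_gt0 x_ge; have q_gt0 : 0 < 4 / eps by rewrite divr_gt0.
rewrite mulr_natl -lnXn // ler_ln ?posrE ?exprn_gt0 //.
by apply: lt_le_trans x_ge; rewrite exprn_gt0.
Qed.

Lemma nb_tries_step12_le eps x : 0 < eps < 1 -> 2 ^+ 58 / eps ^+ 2 <= x ->
  (nb_tries (5%:R / 6%:R * ln (4 / eps) * ln x))%:R
  * (nb_tries (12%:R * ln (4 / eps) * ln x))%:R <= 5 / 2 * ln x ^+ 4.
Proof.
move=> /andP[eps_gt0 eps_lt1] x_ge.
have L_le : 2 * ln (4 / eps) <= ln x.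
  apply: ln_inv_eps_le => //; apply: le_trans x_ge.
  rewrite expr_div_n ler_pM2r ?invr_gt0 ?exprn_gt0 //.
  by rewrite (_ : 4 ^+ 2 = 2 ^+ 4) ?ler_eXn2l ?ltr1n // -!natrX.
have L_ge0 : 0 <= ln (4 / eps) by rewrite ln_ge0 // ler_pdivlMr // mul1r; lra.
set L := ln (4 / eps) in L_le L_ge0 *; set l := ln x in L_le *.
have l_ge0 : 0 <= l by lra.
have n1_le : (nb_tries (5%:R / 6%:R * L * l))%:R <= 5 / 6 * L * l.
  by rewrite /nb_tries truncn_le; nra.
have n2_le : (nb_tries (12%:R * L * l))%:R <= 12 * L * l.
  by rewrite /nb_tries truncn_le; nra.
apply: le_trans (ler_pM (ler0n _ _) (ler0n _ _) n1_le n2_le) _.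
have sq_le : 4 * L ^+ 2 <= l ^+ 2 by nra.
have := ler_wpM2l (exprn_ge0 2 l_ge0) sq_le.
lra.
Qed.

Lemma powR_invn_le n y x : (0 < n)%N -> 0 <= y -> 0 <= x -> y `^ n%:R^-1 <= x -> y <= x ^+ n.
Proof.
move=> n_gt0 y_ge0 x_ge0 le_x; have := lerXn2r n (powR_ge0 _ _) x_ge0 le_x.
by rewrite -(powR_mulrn n (powR_ge0 y _)) -powRrM mulVf ?pnatr_eq0 -?lt0n // powRr1.
Qed.

Lemma dividing_pairs_ln_le lam K : (0 < lam)%N -> (0 < K)%N ->
  (dividing_pairs lam K)%:R * ln (lam%:R : R) <= 6 * ln K%:R.
Proof.
move=> lam_gt0 K_gt0; set m := size (large_prime_divisors lam K).
have ln_lam_ge0 : 0 <= ln (lam%:R : R) by rewrite ln_ge0 // ler1n.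
have m_ln_le : m%:R * ln (lam%:R : R) <= ln K%:R.
  apply: (@le_trans _ _ (m%:R * ln (lam.+1%:R : R))).
    by rewrite ler_wpM2l // ler_ln ?posrE ?ltr0n // ler_nat.
  rewrite mulr_natl -lnXn ?ltr0n // ler_ln ?posrE ?exprn_gt0 ?ltr0n //.
  by rewrite -natrX ler_nat large_prime_divisors_expn_le.
have N_le : (dividing_pairs lam K)%:R <= 6 * m%:R :> R.
  by rewrite -natrM ler_nat dividing_pairs_le.
by apply: le_trans (ler_wpM2r ln_lam_ge0 N_le) _; rewrite -mulrA ler_wpM2l.
Qed.

End Estimates.

Lemma algorithm_prob_dvd_le (R : realType) (lam K : nat) (eps : R) :
  (0 < K)%N -> 0 < eps < 1 -> 2 ^+ 58 / eps ^+ 2 <= lam%:R ->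
  dprob (algorithm lam eps) (fun o => if o is Some (_, q, _) then (q %| K)%N else false)
  <= 15 * ln K%:R / lam%:R ^+ 5.
Proof.
move=> K_gt0 eps_range lam_eps; set x : R := lam%:R.
have x_ge : 2 ^+ 58 <= x.
  apply: le_trans lam_eps; case/andP: eps_range => eps_gt0 eps_lt1.
  by rewrite ler_pdivlMr ?exprn_gt0 // ler_piMr ?exprn_ge0 // expr_le1 // ltW.
have lam_gt2 : (2 < lam)%N.
  by rewrite -(ltr_nat R); apply: lt_le_trans x_ge; rewrite -[X in X < _]expr1 ltr_eXn2l ?ltr1n.
have x_ge1 : 1 <= x by apply: le_trans x_ge; rewrite exprn_ege1 // ler1n.
have x_gt0 : 0 < x by apply: lt_le_trans x_ge1.
have ln_x_ge0 : 0 <= ln x by rewrite ln_ge0.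
have ln_K_ge0 : 0 <= ln (K%:R : R) by rewrite ln_ge0 // ler1n.
have tries := nb_tries_step12_le eps_range lam_eps.
have pairs := dividing_pairs_ln_le R (ltnW (ltnW lam_gt2)) K_gt0.
have cube : 16 * ln x ^+ 3 <= x.
  by apply: cube_ln_le; apply: le_trans x_ge; rewrite ler_eXn2l ?ltr1n.
have sizes : x ^+ 6 <= 16 * ((size (odd_range lam))%:R * (size (even_range lam))%:R).
  by rewrite -natrX -!natrM ler_nat size_ranges_mul_ge.
apply: le_trans (algorithm_prob_dvd_le_pairs _ _ _) _.
have AB_gt0 : 0 < (size (odd_range lam))%:R * (size (even_range lam))%:R :> R.
  by rewrite -(@pmulr_rgt0 _ 16) //; apply: lt_le_trans sizes; rewrite exprn_gt0.
rewrite ler_pdivrMr // [X in _ <= X]mulrAC ler_pdivlMr ?exprn_gt0 // -/x.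
set P := (nb_tries _)%:R * _ in tries *; set N := (dividing_pairs lam K)%:R in pairs *.
have PN_le : P * N <= 15 / 16 * ln K%:R * x.
  have := ler_wpM2r (ler0n _ _ : 0 <= N) tries.
  have := ler_wpM2l (exprn_ge0 3 ln_x_ge0) pairs.
  have := ler_wpM2r ln_K_ge0 cube.
  lra.
have := ler_wpM2r (exprn_ge0 5 (ltW x_gt0)) PN_le.
have := ler_wpM2l ln_K_ge0 sizes.
lra.
Qed.

Unset Implicit Arguments.

Theorem theorem2 (R : realType) (K lam : nat) (mu eps : R) :
  (0 < K)%N ->
  0 < mu < 1 ->
  0 < eps < 1 ->
  2 ^+ 58 / eps ^+ 2 <= lam%:R ->
  lam%:R >= Num.max (2 ^+ 56 / mu ^+ 2) ((48 / mu * ln K%:R) `^ (5%:R^-1)) ->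
  dprob (algorithm lam eps)
    (fun o => match o with
              | Some (p, q, omega) => (q %| K)%N
              | None => false
              end) <= mu.
Proof.
move=> K_gt0 /andP[mu_gt0 _] eps_range lam_eps; rewrite ge_max => /andP[_ lam_K].
apply: le_trans (algorithm_prob_dvd_le K_gt0 eps_range lam_eps) _.
have lam_gt0 : 0 < lam%:R :> R.
  by apply: lt_le_trans lam_eps; case/andP: eps_range => eps_gt0 _; rewrite divr_gt0 ?exprn_gt0.
have ln_K_ge0 : 0 <= ln (K%:R : R) by rewrite ln_ge0 // ler1n.
have lnK_le : 48 * ln K%:R <= mu * lam%:R ^+ 5.
  rewrite -[48 * _](@mulVKf _ mu) ?gt_eqF // ler_pM2l // mulrCA mulrA.
  apply: (powR_invn_le (n := 5) _ _ _ lam_K) => //.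
  by rewrite mulr_ge0 // divr_ge0 // ltW.
rewrite ler_pdivrMr ?exprn_gt0 //; lra.
Qed.
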